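(* Let $a,b,c\ge 0$ be integers with $\gcd(a,b,c)=1$ and let $M$ be the list of vectors of $\mathbb{F}_2^2$ consisting of $(1,0)$ with multiplicity $a$, $(0,1)$ with multiplicity $b$ and $(1,1)$ with multiplicity $c$, assumed to generate $\mathbb{F}_2^2$. Let $K=K(G(\mathbb{F}_2^2,M))$. Then $$\operatorname{Syl}_2 K\cong\begin{cases}\mathbb{Z}/2^{v_2(b+c)+1}\mathbb{Z} & a\text{ odd},\ b,c\text{ even},\\ \mathbb{Z}/2^{v_2(a+b)+1}\mathbb{Z} & a,b\text{ odd},\ c\text{ even},\\ \mathbb{Z}/2^{e}\mathbb{Z}\times\mathbb{Z}/2^{f}\mathbb{Z} & a,b,c\text{ odd},\end{cases}$$ where $f=\max(v_2(a+b),v_2(b+c),v_2(a+c))+1$ and $e=v_2(|K|)-f$.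
   Context: For a finite list $M=(v_1,\dots,v_n)$ of nonzero vectors generating $\mathbb{F}_2^r$, the Cayley graph $G(\mathbb{F}_2^r,M)$ has vertex set $\mathbb{F}_2^r$ and Laplacian $L$ indexed by $\mathbb{F}_2^r$ with $L_{u,u}=n$ and $L_{u,w}=-\#\{i:u+v_i=w\}$ for $u\ne w$; $\operatorname{coker}L\cong\mathbb{Z}\oplus K(G)$ with $K(G)$ finite abelian (the sandpile group). $v_2$ denotes the $2$-adic valuation of a nonzero integer. *)

From HB Require Import structures.
From mathcomp Require Import all_boot all_order all_algebra all_fingroup all_solvable.
Set Implicit Arguments. Unset Strict Implicit. Unset Printing Implicit Defensive.
Import GRing.Theory.
Local Open Scope ring_scope.

Notation F2vec r := 'rV['F_2]_r.

Definition cayley_lap (r : nat) (M : seq (F2vec r)) (u w : F2vec r) : int :=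
  if u == w then (size M)%:Z else - (count (fun v => u + v == w) M)%:Z.

Definition lap_mul (r : nat) (M : seq (F2vec r)) (z : {ffun F2vec r -> int})
  : {ffun F2vec r -> int} :=
  [ffun u => \sum_(w : F2vec r) cayley_lap M u w * z w].

(* [is_sandpile_group M K] : coker L is isomorphic to Z (+) K, witnessed by a
   surjective group homomorphism Z^V -> Z x K whose kernel is exactly im L. *)
Definition is_sandpile_group (r : nat) (M : seq (F2vec r))
  (gT : finGroupType) (K : {group gT}) : Prop :=
  exists (f : {ffun F2vec r -> int} -> int) (g : {ffun F2vec r -> int} -> gT),
    [/\ (forall x y, f (x + y) = f x + f y),
        (forall x y, g (x + y) = (g x * g y)%g),
        (forall x, g x \in K),
        (forall (n : int) (k : gT), k \in K -> exists x, f x = n /\ g x = k)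
      & (forall x, (f x = 0 /\ g x = 1%g) <-> exists z, x = lap_mul M z)].

Definition e1 : F2vec 2 := delta_mx 0 0.
Definition e2 : F2vec 2 := delta_mx 0 1.
Definition e12 : F2vec 2 := e1 + e2.

Definition Mabc (a b c : nat) : seq (F2vec 2) :=
  nseq a e1 ++ nseq b e2 ++ nseq c e12.

From HB Require Import structures.
From mathcomp Require Import all_boot all_order all_algebra all_fingroup all_solvable.
From mathcomp Require Import ring zify.
Set Implicit Arguments. Unset Strict Implicit. Unset Printing Implicit Defensive.

(** The sandpile group K is the torsion part of the cokernel of the Laplacian L
    on Z^V, V = F_2^2 = {0, e1, e2, e12}, and it is generated by the classes of
    the differences d_v = delta_0 - delta_v (v <> 0).  The characters of V
    diagonalise L, with eigenvalues 0, 2(a+c), 2(b+c) and 2(a+b); comparing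
    character coefficients shows that d_e1 has order 2 lcm(a+c, a+b) and d_e2
    has order 2 lcm(b+c, a+b) in K.  Explicit relations modulo the image of L
    show that, up to elements of odd order, K is generated by d_e2 when a is odd
    and b, c are even, by d_e1 when a, b are odd and c is even, and by d_e1 and
    d_e2 when a, b, c are odd (as a d_e1 + b d_e2 + c d_e12 = L delta_0).  In an
    abelian group the 2-parts of such generators generate the Sylow 2-subgroup,
    and in the last case the generator of larger order splits off as a direct
    factor. *)

(** * Sylow subgroups of abelian groups *)

Section AbelianPGroups.
Import GroupScope.
Variables (gT : finGroupType) (p : nat).

Lemma mem_joing_cycles_constt (K : {group gT}) (A B x : gT) (T : nat) :
    abelian K -> A \in K -> B \in K -> p.-elt x -> coprime p T ->
  x ^+ T \in <[A]> <*> <[B]> -> x \in <[A.`_p]> <*> <[B.`_p]>.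
Proof.
move=> cKK AK BK px pT.
have sAK : <[A]> \subset K by rewrite cycle_subG.
have sBK : <[B]> \subset K by rewrite cycle_subG.
rewrite comm_joingE; last exact: centC (sub_abelian_cent2 cKK sAK sBK).
case/mulsgP=> _ _ /cycleP[i ->] /cycleP[j ->] xT.
have xTK : coprime #[x] T.
  have [[|k] ->] := p_natP px; first by rewrite coprime1n.
  by rewrite coprime_pexpl.
have <- : (x ^+ T) ^+ expg_invn <[x]> T = x by rewrite expgK ?cycle_id.
rewrite groupX // -(constt_p_elt (p_eltX T px)) xT consttM; last first.
  by apply: (centsP cKK); rewrite groupX.
by rewrite !consttX groupM // groupX // mem_gen // inE cycle_id ?orbT.
Qed.

Lemma sylow_abelian_joing_cycles (K P : {group gT}) (A B : gT) (T : nat) :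
    abelian K -> p.-Sylow(K) P -> A \in K -> B \in K -> coprime p T ->
    {in K, forall k, k ^+ T \in <[A]> <*> <[B]>} ->
  P :=: <[A.`_p]> <*> <[B.`_p]>.
Proof.
move=> cKK sylP AK BK pT KT.
have nPK : P <| K by rewrite -sub_abelian_normal ?(pHall_sub sylP).
have memP k : k \in K -> (k \in P) = p.-elt k := mem_normal_Hall sylP nPK.
have constt_mem k : k \in K -> k.`_p \in P.
  by move=> kK; rewrite memP ?p_elt_constt // groupX.
apply/eqP; rewrite eqEsubset join_subG !cycle_subG !constt_mem // !andbT.
apply/subsetP => x xP; have xK := subsetP (pHall_sub sylP) x xP.
by apply: (mem_joing_cycles_constt cKK AK BK _ pT); rewrite ?KT // -memP.
Qed.

Lemma sylow_abelian_cycle (K P : {group gT}) (A : gT) (T : nat) :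
    abelian K -> p.-Sylow(K) P -> A \in K -> coprime p T ->
    {in K, forall k, k ^+ T \in <[A]>} ->
  P :=: <[A.`_p]>.
Proof.
have AA (B : gT) : <[B]> <*> <[B]> = <[B]> by apply/joing_idPl.
move=> cKK sylP AK pT KT; rewrite -AA.
by apply: (sylow_abelian_joing_cycles cKK sylP AK AK pT) => k /KT; rewrite AA.
Qed.

Lemma joing_cycles_dprod (Y Z : gT) :
  commute Y Z -> #[Z] %| #[Y] -> exists x, <[x]> \x <[Y]> = <[Y]> <*> <[Z]>.
Proof.
move=> cYZ dvd_ZY; set P := <[Y]> <*> <[Z]>.
have sYP : <[Y]> \subset P := joing_subl _ _.
have sZP : <[Z]> \subset P := joing_subr _ _.
have cPP : abelian P by rewrite abelianY !cycle_abelian cents_cycle // commute_sym.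
have nYP : P \subset 'N(<[Y]>) := sub_abelian_norm cPP sYP.
have expP : exponent P = #[Y].
  apply/eqP; rewrite eqn_dvd dvdn_exponent ?(subsetP sYP) ?cycle_id // andbT.
  apply/exponentP => w; rewrite /P cent_joinEr; last by rewrite cents_cycle.
  case/mulsgP=> y z yY zZ ->; rewrite expgMn; last first.
    by apply: (centsP cPP); [apply: (subsetP sYP) | apply: (subsetP sZP)].
  rewrite -(exponent_cycle Y) (expg_exponent yY) mul1g exponent_cycle.
  have [k ->] := dvdnP dvd_ZY.
  by rewrite mulnC expgM -(exponent_cycle Z) (expg_exponent zZ) expg1n.
have YP : Y \in P by rewrite (subsetP sYP) ?cycle_id.
have [H /complP[tiYH defP]] := splitsP (abelian_splits YP (esym expP) cPP).
have sHP : H \subset P by rewrite /P -defP mulG_subr.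
have /isog_cyclic cycH : H \isog P / <[Y]>.
  by apply: sdprod_isog; rewrite sdprodE // (subset_trans sHP).
have /cyclicP[x defH] : cyclic H.
  by rewrite cycH /P /= quotientYidl ?quotient_cyclic ?cycle_cyclic // (subset_trans sZP).
exists x; rewrite dprodC -defH dprodE //.
exact: sub_abelian_cent2 cPP sHP sYP.
Qed.

Hypothesis p_pr : prime p.

Lemma joing_cycles_dprod_max (A B : gT) (m n : nat) :
    commute A B -> #[A] = (p ^ m)%N -> #[B] = (p ^ n)%N ->
  exists x Y, <[x]> \x <[Y]> = <[A]> <*> <[B]> /\ #[Y] = (p ^ maxn m n)%N.
Proof.
wlog le_mn : A B m n / m <= n => [wlog_le cAB oA oB | cAB oA oB].
  case/orP: (leq_total m n) => [le_mn | le_nm]; first exact: wlog_le.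
  have [x [Y [defJ oY]]] := wlog_le B A n m le_nm (commute_sym cAB) oB oA.
  by exists x, Y; rewrite joingC maxnC.
have [x defJ] : exists x, <[x]> \x <[B]> = <[B]> <*> <[A]>.
  by apply: joing_cycles_dprod; rewrite 1?commute_sym // oA oB dvdn_Pexp2l ?prime_gt1.
by exists x, B; rewrite joingC defJ oB (maxn_idPr le_mn).
Qed.

Lemma order_Sylow_dprod_compl (K P : {group gT}) (x Y : gT) (n : nat) :
    p.-Sylow(K) P -> <[x]> \x <[Y]> = P -> #[Y] = (p ^ n)%N ->
  #[x] = (p ^ (logn p #|K| - n))%N.
Proof.
move=> sylP defP oY; have := dprod_card defP.
rewrite (card_Hall sylP) p_part -/(order x) -/(order Y) oY => oxY.
have le_n : n <= logn p #|K|.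
  by rewrite -(dvdn_Pexp2l _ _ (prime_gt1 p_pr)) -oxY dvdn_mull.
by rewrite expnB ?prime_gt0 // -oxY mulnK ?expn_gt0 ?prime_gt0.
Qed.

End AbelianPGroups.

Lemma partn2_double_lcm (m n : nat) : (0 < m)%N -> (0 < n)%N ->
  ((2 * lcmn m n)`_2 = 2 ^ (maxn (logn 2 m) (logn 2 n)).+1)%N.
Proof.
move=> m_gt0 n_gt0; rewrite p_part lognM ?lcmn_gt0 ?m_gt0 //.
by rewrite logn_lcm // (logn_prime _ (isT : prime 2)) eqxx.
Qed.

Import GRing.Theory Num.Theory.
Local Open Scope ring_scope.

(** * Presentations of Z (+) K as a cokernel *)

Section CokernelPresentation.
Variables (V : zmodType) (L : V -> V) (gT : finGroupType) (K : {group gT}).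
Variables (f : V -> int) (g : V -> gT).
Hypothesis fD : {morph f : x y / x + y}.
Hypothesis gD : {morph g : x y / x + y >-> (x * y)%g}.
Hypothesis fg_onto : forall (n : int) (k : gT), k \in K -> exists x, f x = n /\ g x = k.
Hypothesis fg_ker : forall x, (f x = 0 /\ g x = 1%g) <-> exists z, x = L z.

Lemma f_zero : f 0 = 0.
Proof. by apply: (@addrI _ (f 0)); rewrite -fD !addr0. Qed.

Lemma f_mulrn x n : f (x *+ n) = f x *+ n.
Proof. by elim: n => [|n IHn]; rewrite ?f_zero // !mulrS fD IHn. Qed.

Lemma f_mulrz x k : f (x *~ k) = f x * k.
Proof.
have f_opp y : f (- y) = - f y by apply: (@addrI _ (f y)); rewrite -fD !subrr f_zero.
rewrite -mulrzz; case: k => n; last rewrite NegzE !mulrNz f_opp.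
all: by rewrite -!pmulrn f_mulrn.
Qed.

Lemma g_zero : g 0 = 1%g.
Proof. by apply: (@mulgI _ (g 0)); rewrite mulg1 -gD addr0. Qed.

Lemma g_mulrn x n : g (x *+ n) = (g x ^+ n)%g.
Proof. by elim: n => [|n IHn]; rewrite ?g_zero // mulrS gD IHn expgS. Qed.

Lemma g_opp x : g (- x) = (g x)^-1%g.
Proof. by apply: (@mulgI _ (g x)); rewrite -gD subrr g_zero mulgV. Qed.

Lemma g_mulrz_mem (H : {group gT}) x k : g x \in H -> g (x *~ k) \in H.
Proof.
by case: k => n xH; rewrite ?NegzE ?mulrNz ?g_opp ?groupV -pmulrn g_mulrn groupX.
Qed.

Lemma f_lap z : f (L z) = 0.
Proof. by have [] := (fg_ker (L z)).2 (ex_intro _ z erefl). Qed.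

Lemma g_lap z : g (L z) = 1%g.
Proof. by have [] := (fg_ker (L z)).2 (ex_intro _ z erefl). Qed.

Lemma cokernel_abelian : abelian K.
Proof.
apply/centsP => _ /(fg_onto 0)[x [_ <-]] _ /(fg_onto 0)[y [_ <-]].
by rewrite /commute -!gD addrC.
Qed.

Lemma f_eq0_mulrn x n : (0 < n)%N -> f (x *+ n) = 0 -> f x = 0.
Proof.
by move=> n_gt0; rewrite f_mulrn => /eqP; rewrite mulrn_eq0 eqn0Ngt n_gt0 => /eqP.
Qed.

Lemma f_lap_mulrn x n z : (0 < n)%N -> x *+ n = L z -> f x = 0.
Proof. by move=> n_gt0 xn; apply: (f_eq0_mulrn n_gt0); rewrite xn f_lap. Qed.

Lemma order_g_dvdn x n z : x *+ n = L z -> (#[g x]%g %| n)%N.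
Proof. by move=> xn; rewrite order_dvdn -g_mulrn xn g_lap. Qed.

Lemma mem_cycle_g x y n z : x = y *+ n + L z -> g x \in <[g y]>%g.
Proof. by move->; rewrite gD g_lap mulg1 g_mulrn mem_cycle. Qed.

End CokernelPresentation.

(** * Cayley graph Laplacians over F_2^r *)

Lemma lap_mulE (r : nat) (M : seq (F2vec r)) z u : 0 \notin M ->
  lap_mul M z u = (size M)%:Z * z u - \sum_(v <- M) z (u + v).
Proof.
move=> M'0; rewrite ffunE.
have offdiag w : cayley_lap M u w =
    (u == w)%:R * (size M)%:Z - (count (fun v => u + v == w) M)%:Z.
  rewrite /cayley_lap; case: eqVneq => [<- | _]; last by rewrite mul0r sub0r.
  rewrite mul1r (@eq_in_count _ _ pred0) ?count_pred0 ?subr0 // => v vM /=.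
  by rewrite -subr_eq0 addrAC subrr add0r; apply: contraNF M'0 => /eqP <-.
under eq_bigr => w _ do rewrite offdiag mulrBl.
rewrite sumrB (bigD1 u) //= eqxx mul1r big1 ?addr0 => [|w neq_wu]; last first.
  by rewrite eq_sym (negbTE neq_wu) !mul0r.
congr (_ - _); elim: M {M'0 offdiag} => [|v M IHM].
  by rewrite big_nil big1 // => w _; rewrite mul0r.
rewrite big_cons -IHM /=.
under eq_bigr => w _ do rewrite PoszD mulrDl.
rewrite big_split /= (bigD1 (u + v)) //= eqxx mul1r big1 ?addr0 // => w neq_wuv.
by rewrite eq_sym (negbTE neq_wuv) mul0r.
Qed.

Lemma F2vec2_eq (u v : F2vec 2) : u 0 0 = v 0 0 -> u 0 1 = v 0 1 -> u = v.
Proof.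
move=> u0 u1; apply/rowP => -[[|[|//]] lt_j2].
  by rewrite (_ : Ordinal lt_j2 = 0) //; apply/val_inj.
by rewrite (_ : Ordinal lt_j2 = 1) //; apply/val_inj.
Qed.

Lemma F2vec2_cases (u : F2vec 2) : [\/ u = 0, u = e1, u = e2 | u = e12].
Proof.
have F2_cases (x : 'F_2) : x = 0 \/ x = 1.
  by case: x => [[|[|//]] ?]; [left | right]; apply/val_inj.
by case: (F2_cases (u 0 0)) (F2_cases (u 0 1)) => [u0|u0] [u1|u1];
  [constructor 1 | constructor 3 | constructor 2 | constructor 4];
  apply: F2vec2_eq; rewrite ?u0 ?u1 !mxE; apply/val_inj.
Qed.

Lemma Mabc_neq0 (a b c : nat) : 0 \notin Mabc a b c.
Proof.
by rewrite !mem_cat !mem_nseq; apply/norP; split; [|apply/norP; split];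
  apply/nandP; right; apply/eqP => /(congr1 (fun u : F2vec 2 => (u 0 0, u 0 1)));
  rewrite !mxE.
Qed.

Definition vec4 (x0 x1 x2 x3 : int) : {ffun F2vec 2 -> int} :=
  [ffun u : F2vec 2 => if u 0 0 == 0 then (if u 0 1 == 0 then x0 else x2)
             else (if u 0 1 == 0 then x1 else x3)].

Lemma vec4E x0 x1 x2 x3 :
  [/\ vec4 x0 x1 x2 x3 0 = x0, vec4 x0 x1 x2 x3 e1 = x1,
      vec4 x0 x1 x2 x3 e2 = x2 & vec4 x0 x1 x2 x3 e12 = x3].
Proof. by split; rewrite ffunE !mxE. Qed.

Lemma vec4D x0 x1 x2 x3 y0 y1 y2 y3 :
  vec4 x0 x1 x2 x3 + vec4 y0 y1 y2 y3 = vec4 (x0 + y0) (x1 + y1) (x2 + y2) (x3 + y3).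
Proof. by apply/ffunP => u; rewrite !ffunE; do 2!case: ifP. Qed.

Lemma vec4N x0 x1 x2 x3 : - vec4 x0 x1 x2 x3 = vec4 (- x0) (- x1) (- x2) (- x3).
Proof. by apply/ffunP => u; rewrite !ffunE; do 2!case: ifP. Qed.

Lemma vec4Mz x0 x1 x2 x3 k :
  vec4 x0 x1 x2 x3 *~ k = vec4 (x0 * k) (x1 * k) (x2 * k) (x3 * k).
Proof. by apply/ffunP => u; rewrite ffunMzE !ffunE mulrzz; do 2!case: ifP. Qed.

Lemma vec4Mn x0 x1 x2 x3 n :
  vec4 x0 x1 x2 x3 *+ n = vec4 (x0 * n%:Z) (x1 * n%:Z) (x2 * n%:Z) (x3 * n%:Z).
Proof. by rewrite pmulrn vec4Mz. Qed.

Lemma vec4_eta (z : {ffun F2vec 2 -> int}) : z = vec4 (z 0) (z e1) (z e2) (z e12).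
Proof.
have [E0 E1 E2 E3] := vec4E (z 0) (z e1) (z e2) (z e12).
by apply/ffunP => u; case: (F2vec2_cases u) => ->;
  [rewrite E0 | rewrite E1 | rewrite E2 | rewrite E3].
Qed.

Section Laplacian.
Variables a b c : nat.
Local Notation L := (lap_mul (Mabc a b c)).

Lemma lap_Mabc z u : L z u =
  (a + b + c)%:Z * z u - a%:Z * z (u + e1) - b%:Z * z (u + e2) - c%:Z * z (u + e12).
Proof.
rewrite lap_mulE ?Mabc_neq0 // /Mabc !size_cat !size_nseq !big_cat !big_nseq /=.
by rewrite !iter_addr_0 !pmulrn !mulrzz !PoszD; ring.
Qed.

Lemma lap_vec4 y0 y1 y2 y3 : L (vec4 y0 y1 y2 y3) =
  vec4 ((a + b + c)%:Z * y0 - a%:Z * y1 - b%:Z * y2 - c%:Z * y3)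
       ((a + b + c)%:Z * y1 - a%:Z * y0 - b%:Z * y3 - c%:Z * y2)
       ((a + b + c)%:Z * y2 - a%:Z * y3 - b%:Z * y0 - c%:Z * y1)
       ((a + b + c)%:Z * y3 - a%:Z * y2 - b%:Z * y1 - c%:Z * y0).
Proof.
apply/ffunP => u; rewrite lap_Mabc.
by case: (F2vec2_cases u) => ->; rewrite !ffunE !mxE.
Qed.
End Laplacian.

Definition delta0 := vec4 1 0 0 0.
Definition d1 := vec4 1 (-1) 0 0.
Definition d2 := vec4 1 0 (-1) 0.
Definition d12 := vec4 1 0 0 (-1).

(* [psi s1 s2] is the character of F_2^2 mapping e1 to (-1)^s1 and e2 to
   (-1)^s2, and [chi s1 s2 z] is the coefficient of z along it. *)
Definition psi (s1 s2 : bool) := vec4 1 ((-1) ^+ s1) ((-1) ^+ s2) ((-1) ^+ (s1 (+) s2)).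
Definition chi (s1 s2 : bool) (z : {ffun F2vec 2 -> int}) : int :=
  z 0 + (-1) ^+ s1 * z e1 + (-1) ^+ s2 * z e2 + (-1) ^+ (s1 (+) s2) * z e12.

Lemma chi_mulrn s1 s2 z n : chi s1 s2 (z *+ n) = chi s1 s2 z *+ n.
Proof. by rewrite /chi !ffunMnE !mulrnAr -!mulrnDl. Qed.

Lemma chi_vec4 s1 s2 x0 x1 x2 x3 : chi s1 s2 (vec4 x0 x1 x2 x3) =
  x0 + (-1) ^+ s1 * x1 + (-1) ^+ s2 * x2 + (-1) ^+ (s1 (+) s2) * x3.
Proof. by rewrite /chi; have [-> -> -> ->] := vec4E x0 x1 x2 x3. Qed.

Lemma chi_parity s1 s2 t1 t2 z : (2 %| chi s1 s2 z - chi t1 t2 z)%Z.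
Proof.
apply/dvdzP; exists ((t1%:Z - s1%:Z) * z e1 + (t2%:Z - s2%:Z) * z e2 +
  ((t1 (+) t2)%:Z - (s1 (+) s2)%:Z) * z e12).
by rewrite /chi; case: s1 s2 t1 t2 => -[] [] [] /=; ring.
Qed.

Ltac vec4_ring :=
  rewrite ?lap_vec4 /delta0 /d1 /d2 /d12 /psi;
  do 3 rewrite ?vec4Mn ?vec4Mz ?vec4N ?vec4D;
  congr vec4; rewrite ?PoszD ?PoszM; ring.

Section Identities.
Variables a b c : nat.
Local Notation L := (lap_mul (Mabc a b c)).
Local Notation A := a%:Z.
Local Notation B := b%:Z.
Local Notation C := c%:Z.

(* Half the eigenvalue of L on [psi s1 s2]: the number of vectors of M outside
   the kernel of the character. *)
Definition lam (s1 s2 : bool) : nat := a * s1 + b * s2 + c * (s1 (+) s2).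

(* The argument of L is the indicator function of the kernel of [psi s1 s2]. *)
Lemma psi_lap s1 s2 : psi s1 s2 *+ lam s1 s2 =
  L (vec4 1 (~~ s1 : nat)%:Z (~~ s2 : nat)%:Z (~~ (s1 (+) s2) : nat)%:Z).
Proof. by case: s1 s2 => -[]; rewrite /lam /=; vec4_ring. Qed.

Lemma chi_lap s1 s2 z : chi s1 s2 (L z) = 2 * (lam s1 s2)%:Z * chi s1 s2 z.
Proof.
rewrite (vec4_eta z) lap_vec4 !chi_vec4 /lam.
by case: s1 s2 => -[] /=; rewrite ?PoszD ?PoszM; ring.
Qed.

(* Applying [chi t1 t2] to [d *+ j = L y] gives [chi t1 t2 y = 0], so that
   [chi s1 s2 y] is even; applying [chi s1 s2] gives [j = lam s1 s2 * chi s1 s2 y]. *)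
Lemma dvdn_lap_mulrn d y j s1 s2 t1 t2 :
    d *+ j = L y -> chi t1 t2 d = 0 -> (0 < lam t1 t2)%N -> chi s1 s2 d = 2 ->
  (2 * lam s1 s2 %| j)%N.
Proof.
move=> dj chit0 lamt chis2.
have := congr1 (chi t1 t2) dj; have := congr1 (chi s1 s2) dj.
rewrite !chi_mulrn chit0 chis2 !chi_lap mul0rn => hs /esym/eqP.
have lamt_neq0 : (lam t1 t2)%:Z != 0 by rewrite eqz_nat -lt0n.
rewrite !mulf_eq0 /= (negbTE lamt_neq0) => /eqP chit_y.
have /dvdzP[k] := chi_parity s1 s2 t1 t2 y; rewrite chit_y subr0 => chis_y.
suff: ((2 * lam s1 s2)%:Z %| j%:Z)%Z by rewrite dvdzE !absz_nat.
apply/dvdzP; exists k; apply: (@mulfI _ 2) => //.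
transitivity (2 *+ j : int); first by rewrite [RHS]pmulrn mulrzz.
by rewrite hs chis_y PoszM; ring.
Qed.

Lemma lap_delta0 : L delta0 = d1 *+ a + d2 *+ b + d12 *+ c.
Proof. by vec4_ring. Qed.

Lemma d1_double : d1 *+ 2 = psi true false + psi true true. Proof. by vec4_ring. Qed.
Lemma d2_double : d2 *+ 2 = psi false true + psi true true. Proof. by vec4_ring. Qed.
Lemma d12_double : d12 *+ 2 = psi true false + psi false true. Proof. by vec4_ring. Qed.

(* Modulo the image of L, odd multiples of d1 and d12 are multiples of d2 when a
   is odd and b, c are even, and odd multiples of d2 and d12 are multiples of d1
   when a, b are odd and c is even. *)
Lemma d1_mulrn_d2 :
  d1 *+ ((a + b) * (a + c)) = d2 *+ ((a + b) * (b + c)) + L (vec4 0 (- A) B 0).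
Proof. by vec4_ring. Qed.

Lemma d12_mulrn_d2 : d12 *+ ((a + b) * (a + c)) =
  d2 *+ ((a + b) * (a + b + 2 * c)) + L (vec4 (- (A + C)) (- A) B (- (A + C))).
Proof. by vec4_ring. Qed.

Lemma d2_mulrn_d1 : d2 *+ ((b + c) * (a + c)) =
  d1 *+ ((a + c) * (a + 2 * b + c)) + L (vec4 (- B) (A + C) (- B) 0).
Proof. by vec4_ring. Qed.

Lemma d12_mulrn_d1 :
  d12 *+ ((a + c) * (b + c)) = d1 *+ ((a + c) * (a + b)) + L (vec4 0 A 0 (- C)).
Proof. by vec4_ring. Qed.

End Identities.

Lemma vec4_decomp (z : {ffun F2vec 2 -> int}) : z =
  delta0 *~ (z 0 + z e1 + z e2 + z e12) + d1 *~ - z e1 + d2 *~ - z e2 + d12 *~ - z e12.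
Proof. by rewrite {1}(vec4_eta z); vec4_ring. Qed.

Lemma span_Mabc_bc_gt0 (a b c : nat) : <<Mabc a b c>>%VS = fullv -> (0 < b + c)%N.
Proof.
move=> span_full; rewrite lt0n addn_eq0; apply: contraTN isT => /andP[/eqP b0 /eqP c0].
rewrite {}b0 {}c0 in span_full.
have : (<<Mabc a 0 0>> <= <[e1]>)%VS.
  by apply/span_subvP => x; rewrite /Mabc cats0 => /nseqP[-> _]; apply: memv_line.
rewrite span_full => /dimvS; rewrite dimvf dim_vline dim_matrix.
by case: eqP => // /(congr1 (fun u : F2vec 2 => u 0 0)); rewrite !mxE.
Qed.

(** * The sandpile group of M = (e1^a, e2^b, e12^c) *)

Section SandpileGroupMabc.
Variables (a b c : nat) (gT : finGroupType) (K : {group gT}).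
Variables (f : {ffun F2vec 2 -> int} -> int) (g : {ffun F2vec 2 -> int} -> gT).
Local Notation L := (lap_mul (Mabc a b c)).
Hypothesis fD : {morph f : x y / x + y}.
Hypothesis gD : {morph g : x y / x + y >-> (x * y)%g}.
Hypothesis gK : forall x, g x \in K.
Hypothesis fg_onto : forall (n : int) (k : gT), k \in K -> exists x, f x = n /\ g x = k.
Hypothesis fg_ker : forall x, (f x = 0 /\ g x = 1%g) <-> exists z, x = L z.
Hypothesis a_gt0 : (0 < a)%N.
Hypothesis bc_gt0 : (0 < b + c)%N.

Lemma lam_gt0 s1 s2 : s1 || s2 -> (0 < lam a b c s1 s2)%N.
Proof. by case: s1 s2 => -[] // _; rewrite /lam /=; lia. Qed.

Lemma f_double_psi d s1 s2 t1 t2 :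
  d *+ 2 = psi s1 s2 + psi t1 t2 -> s1 || s2 -> t1 || t2 -> f d = 0.
Proof.
move=> d2_eq s_nz t_nz; apply: (f_eq0_mulrn fD (isT : (0 < 2)%N)).
by rewrite d2_eq fD !(f_lap_mulrn fD fg_ker (lam_gt0 _) (psi_lap _ _ _ _ _)).
Qed.

Lemma fE z : f z = f delta0 * (z 0 + z e1 + z e2 + z e12).
Proof.
rewrite {1}(vec4_decomp z) 3!fD !(f_mulrz fD) (f_double_psi d1_double) //.
by rewrite (f_double_psi d2_double) // (f_double_psi d12_double) // !mul0r !addr0.
Qed.

Lemma cokernel_generators k :
  k \in K -> exists x1 x2 x3 : int, k = g (d1 *~ x1 + d2 *~ x2 + d12 *~ x3).
Proof.
move=> kK; have [x [fx0 <-]] := fg_onto 0 kK.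
have [y [fy1 _]] := fg_onto 1 (group1 K).
have f_delta0 : f delta0 != 0 by apply/eqP => f0; move: fy1; rewrite fE f0 mul0r.
have : f delta0 * (x 0 + x e1 + x e2 + x e12) == 0 by rewrite -fE fx0.
rewrite mulf_eq0 (negbTE f_delta0) => /eqP sum_x0.
by exists (- x e1), (- x e2), (- x e12); rewrite {1}(vec4_decomp x) sum_x0 mulr0z add0r.
Qed.

Lemma expg_mem_cokernel (H : {group gT}) t1 t2 t3 :
    g (d1 *+ t1) \in H -> g (d2 *+ t2) \in H -> g (d12 *+ t3) \in H ->
  {in K, forall k, (k ^+ (t1 * t2 * t3) \in H)%g}.
Proof.
move=> H1 H2 H3 _ /cokernel_generators[x1 [x2 [x3 ->]]]; rewrite -(g_mulrn gD).
have -> : (d1 *~ x1 + d2 *~ x2 + d12 *~ x3) *+ (t1 * t2 * t3) =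
    (d1 *+ t1) *~ (x1 * (t2 * t3)%:Z) + (d2 *+ t2) *~ (x2 * (t1 * t3)%:Z)
    + (d12 *+ t3) *~ (x3 * (t1 * t2)%:Z) by vec4_ring.
by rewrite !gD !groupM ?(g_mulrz_mem gD).
Qed.

Lemma order_g_double_psi d s1 s2 t1 t2 u1 u2 :
    d *+ 2 = psi s1 s2 + psi t1 t2 -> s1 || s2 -> t1 || t2 ->
    chi u1 u2 d = 0 -> u1 || u2 -> chi s1 s2 d = 2 -> chi t1 t2 d = 2 ->
  #[g d]%g = (2 * lcmn (lam a b c s1 s2) (lam a b c t1 t2))%N.
Proof.
move=> d2_eq s_nz t_nz chi_u u_nz chi_s chi_t.
apply/eqP; rewrite eqn_dvd; apply/andP; split.
  have psi_lcm v1 v2 m : (lam a b c v1 v2 %| m)%N -> (g (psi v1 v2) ^+ m = 1)%g.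
    move=> dvd_m; apply/eqP; rewrite -order_dvdn (dvdn_trans _ dvd_m) //.
    exact: (order_g_dvdn gD fg_ker (psi_lap _ _ _ _ _)).
  rewrite order_dvdn expgM -(g_mulrn gD) d2_eq gD expgMn.
    by rewrite !psi_lcm ?mulg1 ?dvdn_lcml ?dvdn_lcmr.
  exact: (centsP (cokernel_abelian gD fg_onto)).
have f_d : f d = 0 := f_double_psi d2_eq s_nz t_nz.
have [y dy] : exists y, d *+ #[g d]%g = L y.
  by apply/fg_ker; rewrite (f_mulrn fD) f_d mul0rn (g_mulrn gD) expg_order.
by rewrite muln_lcmr dvdn_lcm !(dvdn_lap_mulrn dy chi_u (lam_gt0 u_nz)).
Qed.

Lemma order_constt2_g_d1 :
  #[(g d1).`_2]%g = (2 ^ (maxn (logn 2 (a + c)) (logn 2 (a + b))).+1)%N.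
Proof.
have chi_d1 s1 s2 : chi s1 s2 d1 = 1 + (-1) ^+ s1 * -1 by rewrite /d1 chi_vec4; ring.
rewrite order_constt (@order_g_double_psi _ _ _ _ _ false true d1_double) ?chi_d1 //=; try ring.
by rewrite /lam /= !muln1 !muln0 !addn0 partn2_double_lcm //; lia.
Qed.

Lemma order_constt2_g_d2 :
  #[(g d2).`_2]%g = (2 ^ (maxn (logn 2 (b + c)) (logn 2 (a + b))).+1)%N.
Proof.
have chi_d2 s1 s2 : chi s1 s2 d2 = 1 + (-1) ^+ s2 * -1 by rewrite /d2 chi_vec4; ring.
rewrite order_constt (@order_g_double_psi _ _ _ _ _ true false d2_double) ?chi_d2 //=; try ring.
by rewrite /lam /= !muln1 !muln0 !addn0 add0n partn2_double_lcm //; lia.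
Qed.

Variable P : {group gT}.
Hypothesis sylP : (2.-Sylow(K) P)%g.

Lemma sylow_Mabc_odd_even_even : odd a -> ~~ odd b -> ~~ odd c ->
  exists x, P :=: <[x]>%g /\ #[x]%g = (2 ^ (logn 2 (b + c)).+1)%N.
Proof.
move=> oa eb ec; have odd_ab : odd (a + b) by rewrite oddD oa (negbTE eb).
have odd_ac : odd (a + c) by rewrite oddD oa (negbTE ec).
exists ((g d2).`_2)%g; split.
  pose T := ((a + b) * (a + c) * 1 * ((a + b) * (a + c)))%N.
  apply: (@sylow_abelian_cycle _ _ _ _ _ T (cokernel_abelian gD fg_onto) sylP (gK d2)).
    by rewrite coprime2n !oddM odd_ab odd_ac.
  apply: expg_mem_cokernel.
  - exact: (mem_cycle_g gD fg_ker (d1_mulrn_d2 a b c)).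
  - by rewrite (g_mulrn gD) mem_cycle.
  - exact: (mem_cycle_g gD fg_ker (d12_mulrn_d2 a b c)).
by rewrite order_constt2_g_d2 (@logn_coprime 2 (a + b)) ?maxn0 ?coprime2n.
Qed.

Lemma sylow_Mabc_odd_odd_even : odd a -> odd b -> ~~ odd c ->
  exists x, P :=: <[x]>%g /\ #[x]%g = (2 ^ (logn 2 (a + b)).+1)%N.
Proof.
move=> oa ob ec; have odd_bc : odd (b + c) by rewrite oddD ob (negbTE ec).
have odd_ac : odd (a + c) by rewrite oddD oa (negbTE ec).
exists ((g d1).`_2)%g; split.
  pose T := (1 * ((b + c) * (a + c)) * ((a + c) * (b + c)))%N.
  apply: (@sylow_abelian_cycle _ _ _ _ _ T (cokernel_abelian gD fg_onto) sylP (gK d1)).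
    by rewrite coprime2n !oddM odd_bc odd_ac.
  apply: expg_mem_cokernel.
  - by rewrite (g_mulrn gD) mem_cycle.
  - exact: (mem_cycle_g gD fg_ker (d2_mulrn_d1 a b c)).
  - exact: (mem_cycle_g gD fg_ker (d12_mulrn_d1 a b c)).
by rewrite order_constt2_g_d1 (@logn_coprime 2 (a + c)) ?max0n ?coprime2n.
Qed.

Lemma sylow_Mabc_odd_odd_odd : odd a -> odd b -> odd c ->
  let F := (maxn (maxn (logn 2 (a + b)) (logn 2 (b + c))) (logn 2 (a + c))).+1 in
  exists x y : gT, (<[x]> \x <[y]>)%g = P /\
    #[x]%g = (2 ^ (logn 2 #|K| - F))%N /\ #[y]%g = (2 ^ F)%N.
Proof.
move=> oa ob oc F; set u := ((g d1).`_2)%g; set v := ((g d2).`_2)%g.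
have cKK := cokernel_abelian gD fg_onto.
have d1J : g d1 \in (<[g d1]> <*> <[g d2]>)%G by rewrite mem_gen // inE cycle_id.
have d2J : g d2 \in (<[g d1]> <*> <[g d2]>)%G by rewrite mem_gen // inE cycle_id orbT.
have defP : P :=: (<[u]> <*> <[v]>)%g.
  apply: (@sylow_abelian_joing_cycles _ _ _ _ _ _ (1 * 1 * c) cKK sylP (gK d1) (gK d2)).
    by rewrite coprime2n !oddM oc.
  apply: expg_mem_cokernel; rewrite ?mulr1n //.
  have -> : d12 *+ c = L delta0 - (d1 *+ a + d2 *+ b) by rewrite lap_delta0 addrC addKr.
  by rewrite gD (g_lap fg_ker) mul1g (g_opp gD) gD !(g_mulrn gD) groupV groupM ?groupX.
have cuv : commute u v by apply: (centsP cKK); rewrite groupX ?gK.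
have [x [y [defJ oy]]] :=
  joing_cycles_dprod_max (isT : prime 2) cuv order_constt2_g_d1 order_constt2_g_d2.
exists x, y; rewrite -defP in defJ.
have oyF : #[y]%g = (2 ^ F)%N by rewrite oy /F; congr (2 ^ _)%N; lia.
by split; [|split]; rewrite // (order_Sylow_dprod_compl _ sylP defJ oyF).
Qed.

End SandpileGroupMabc.

Local Close Scope ring_scope.

Theorem mainTheorem14 (a b c : nat)
  (Hgcd : gcdn (gcdn a b) c = 1%N)
  (Hgen : (<<Mabc a b c>>)%VS = fullv)
  (gT : finGroupType) (K : {group gT})
  (HK : is_sandpile_group (Mabc a b c) K)
  (P : {group gT}) (HP : (2.-Sylow(K) P)%g) :
  [/\ (odd a && ~~ odd b && ~~ odd c ->
         exists x : gT, P :=: <[x]>%g /\ #[x]%g = 2 ^ (logn 2 (b + c)).+1),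
      (odd a && odd b && ~~ odd c ->
         exists x : gT, P :=: <[x]>%g /\ #[x]%g = 2 ^ (logn 2 (a + b)).+1)
    & (odd a && odd b && odd c ->
         let f := (maxn (maxn (logn 2 (a + b)) (logn 2 (b + c))) (logn 2 (a + c))).+1 in
         let e := (logn 2 #|K| - f)%N in
         exists x y : gT, (<[x]> \x <[y]>)%g = P /\ #[x]%g = 2 ^ e /\ #[y]%g = 2 ^ f)].
Proof.
have bc_gt0 := span_Mabc_bc_gt0 Hgen.
case: HK => f [g [fD gD gK fg_onto fg_ker]].
split=> [/andP[/andP[oa eb] ec] | /andP[/andP[oa ob] ec] | /andP[/andP[oa ob] oc]].
- exact: (sylow_Mabc_odd_even_even fD gD gK fg_onto fg_ker (odd_gt0 oa) bc_gt0 HP oa eb ec).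
- exact: (sylow_Mabc_odd_odd_even fD gD gK fg_onto fg_ker (odd_gt0 oa) bc_gt0 HP oa ob ec).
- exact: (sylow_Mabc_odd_odd_odd fD gD gK fg_onto fg_ker (odd_gt0 oa) bc_gt0 HP oa ob oc).
Qed.
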